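(* The eigenvalues of $\mathcal F_\omega^{-1}\mathcal R$ cluster at $0$ from the right half-plane as $\omega\to+\infty$. Precisely: for every $\delta>0$ there is $\Omega>0$ such that, for every $\omega>\Omega$, every eigenvalue $\eta$ of $\mathcal F_\omega^{-1}\mathcal R$ satisfies $$0<\operatorname{Re}\eta<\delta\quad\text{and}\quad|\operatorname{Im}\eta|<\delta .$$
   Context: Let $M\ge 1$ be an integer and let $I$ denote an identity matrix of the appropriate size. Let $T\in\mathbb R^{M\times M}$ be real symmetric positive definite. Let $D\in\mathbb R^{M\times M}$ be diagonal with nonnegative diagonal entries. Define the block matrices in $\mathbb R^{2M\times 2M}$: $$\mathcal R=\begin{bmatrix} I & T-D\\ D-T & I\end{bmatrix},\qquad \mathcal T=\begin{bmatrix} I & T\\ -T & I\end{bmatrix},\qquad \mathcal D=\begin{bmatrix} 0 & -D\\ D & 0\end{bmatrix}.$$ Thus $\mathcal R=\mathcal T+\mathcal D$. For $\omega>0$, the NASS preconditioner is $$\mathcal F_\omega=\tfrac{1}{2\omega}(\omega I+\mathcal T)(\omega I+\mathcal D).$$ *)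

From HB Require Import structures.
From mathcomp Require Import all_boot all_order all_algebra.
From mathcomp Require Import reals.
From mathcomp Require Import complex.
Set Implicit Arguments. Unset Strict Implicit. Unset Printing Implicit Defensive.
Import Order.TTheory GRing.Theory Num.Theory.
Local Open Scope ring_scope.

Definition sym_posdef (R : realType) (n : nat) (T : 'M[R]_n) : Prop :=
  T^T = T /\ (forall x : 'cV[R]_n, x != 0 -> 0 < (x^T *m T *m x) 0 0).

Definition nonneg_diag (R : realType) (n : nat) (D : 'M[R]_n) : Prop :=
  is_diag_mx D /\ (forall i, 0 <= D i i).

Definition calR (R : realType) (n : nat) (T D : 'M[R]_n) : 'M[R]_(n + n) :=
  block_mx 1%:M (T - D) (D - T) 1%:M.

Definition calT (R : realType) (n : nat) (T : 'M[R]_n) : 'M[R]_(n + n) :=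
  block_mx 1%:M T (- T) 1%:M.

Definition calD (R : realType) (n : nat) (D : 'M[R]_n) : 'M[R]_(n + n) :=
  block_mx 0 (- D) D 0.

Definition NASS (R : realType) (n : nat) (T D : 'M[R]_n) (w : R) : 'M[R]_(n + n) :=
  (2 * w)^-1 *: ((w%:M + calT T) *m (w%:M + calD D)).

Definition precond_C (R : realType) (n : nat) (T D : 'M[R]_n) (w : R)
  : 'M[R[i]]_(n + n) :=
  map_mx (fun x => (x%:C)%C) (invmx (NASS T D w) *m calR T D).

(* Write [F_w = (2 w)^-1 G_w] with [G_w = w^2 I + w R + T D].  If [u] is a left
   eigenvector of [F_w^-1 R] for [eta], then [alpha = u F_w^-1] satisfies
   [2 w (alpha R alpha^* ) = eta (alpha G_w alpha^* )].  As [R - I] is skew-symmetric,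
   [alpha R alpha^* = |alpha|^2 + i s] with [|s| = O(|alpha|^2)], and
   [alpha G_w alpha^* = (w^2 + w) |alpha|^2 + i w s + O(|alpha|^2)].  Hence
   [eta = 2 w (|alpha|^2 + i s) / (alpha G_w alpha^* )] has positive real part and
   modulus [O(1 / w)].  The argument is carried out on the real and imaginary parts
   [a], [b] of [alpha]. *)

From mathcomp Require Import all_boot all_order all_algebra.
From mathcomp Require Import reals complex ring lra.
Set Implicit Arguments. Unset Strict Implicit. Unset Printing Implicit Defensive.
Import Order.TTheory GRing.Theory Num.Theory.
Local Open Scope ring_scope.

Section RealForms.
Variables (R : realFieldType) (n : nat).
Implicit Types (u v : 'rV[R]_n) (A B : 'M[R]_n).

Definition mxform u v A : R := (u *m A *m v^T) 0 0.

Definition sqnorm v : R := \sum_i v 0 i ^+ 2.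

Definition mxnorm1 A : R := \sum_i \sum_j `|A i j|.

Lemma mxformE u v A : mxform u v A = \sum_i \sum_j u 0 i * A i j * v 0 j.
Proof.
rewrite /mxform mxE exchange_big; apply: eq_bigr => j _.
by rewrite !mxE mulr_suml.
Qed.

Lemma mxformDl u v A B : mxform u v (A + B) = mxform u v A + mxform u v B.
Proof. by rewrite /mxform mulmxDr mulmxDl mxE. Qed.

Lemma mxformZl u v a A : mxform u v (a *: A) = a * mxform u v A.
Proof. by rewrite /mxform -scalemxAr -scalemxAl mxE. Qed.

Lemma mxformNl u v A : mxform u v (- A) = - mxform u v A.
Proof. by rewrite -scaleN1r mxformZl mulN1r. Qed.

Lemma mxform1 v : mxform v v 1%:M = sqnorm v.
Proof. by rewrite /mxform mulmx1 mxE; apply: eq_bigr => i _; rewrite !mxE expr2. Qed.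

Lemma mxform_tr u v A : mxform v u A = mxform u v A^T.
Proof.
rewrite /mxform; transitivity ((v *m A *m u^T)^T 0 0); first by rewrite [in RHS]mxE.
by rewrite !trmx_mul trmxK mulmxA.
Qed.

Lemma mxform_skew v A : A^T = - A -> mxform v v A = 0.
Proof.
move=> skA; have := mxform_tr v v A; rewrite skA mxformNl => e.
by apply/eqP; rewrite -[_ == 0](mulrn_eq0 _ 2) mulr2n {1}e addNr.
Qed.

Lemma sqnorm_ge0 v : 0 <= sqnorm v.
Proof. by apply: sumr_ge0 => i _; rewrite sqr_ge0. Qed.

Lemma sqnorm_gt0 v : v != 0 -> 0 < sqnorm v.
Proof.
move=> v_neq0; have [i vi_neq0] : exists i, v 0 i != 0.
  apply/existsP; apply: contraR v_neq0 => /existsPn v0; apply/eqP/matrixP => a b.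
  by rewrite !ord1 mxE; apply/eqP; move: (v0 b); rewrite negbK.
rewrite /sqnorm (bigD1 i) //= ltr_pwDl ?sumr_ge0 // => [|j _]; last exact: sqr_ge0.
by rewrite lt_def sqr_ge0 sqrf_eq0 vi_neq0.
Qed.

Lemma sqr_le_sqnorm v i : v 0 i ^+ 2 <= sqnorm v.
Proof. by rewrite /sqnorm (bigD1 i) //= lerDl sumr_ge0 // => j _; rewrite sqr_ge0. Qed.

Lemma mxnorm1_ge0 A : 0 <= mxnorm1 A.
Proof. by apply: sumr_ge0 => i _; apply: sumr_ge0. Qed.

Lemma mxform_bound u v A : 2 * `|mxform u v A| <= mxnorm1 A * (sqnorm u + sqnorm v).
Proof.
rewrite mxformE /mxnorm1 mulr_suml.
apply: le_trans (ler_wpM2l _ (ler_norm_sum _ _ _)) _ => //.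
rewrite mulr_sumr; apply: ler_sum => i _; rewrite mulr_suml.
apply: le_trans (ler_wpM2l _ (ler_norm_sum _ _ _)) _ => //.
rewrite mulr_sumr; apply: ler_sum => j _.
have := sqr_le_sqnorm u i; have := sqr_le_sqnorm v j.
rewrite !normrM -[u 0 i ^+ 2]real_normK ?num_real // -[v 0 j ^+ 2]real_normK ?num_real //.
have := mulr_ge0 (normr_ge0 (A i j)) (sqr_ge0 (`|u 0 i| - `|v 0 j|)).
have := normr_ge0 (A i j); nra.
Qed.

Lemma mxform_combl u a b w A B x y :
  u *m A = x *: (a *m B) + y *: (b *m B) ->
  mxform u w A = x * mxform a w B + y * mxform b w B.
Proof. by rewrite /mxform => ->; rewrite mulmxDl -!scalemxAl !mxE. Qed.

(* For [alpha = a + i b], the real and imaginary parts of [alpha A alpha^* ]. *)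
Definition hform_re a b A := mxform a a A + mxform b b A.
Definition hform_im a b A := mxform b a A - mxform a b A.

Lemma hform_reD a b A B : hform_re a b (A + B) = hform_re a b A + hform_re a b B.
Proof. by rewrite /hform_re !mxformDl addrACA. Qed.

Lemma hform_imD a b A B : hform_im a b (A + B) = hform_im a b A + hform_im a b B.
Proof. by rewrite /hform_im !mxformDl opprD addrACA. Qed.

Lemma hform_reZ a b x A : hform_re a b (x *: A) = x * hform_re a b A.
Proof. by rewrite /hform_re !mxformZl mulrDr. Qed.

Lemma hform_imZ a b x A : hform_im a b (x *: A) = x * hform_im a b A.
Proof. by rewrite /hform_im !mxformZl mulrBr. Qed.

Lemma hform_re1 a b : hform_re a b 1%:M = sqnorm a + sqnorm b.
Proof. by rewrite /hform_re !mxform1. Qed.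

Lemma hform_im1 a b : hform_im a b 1%:M = 0.
Proof. by rewrite /hform_im mxform_tr trmx1 subrr. Qed.

Lemma hform_re_skew a b A : A^T = - A -> hform_re a b A = 0.
Proof. by move=> skA; rewrite /hform_re !mxform_skew ?addr0. Qed.

Lemma hform_re_bound a b A : `|hform_re a b A| <= mxnorm1 A * (sqnorm a + sqnorm b).
Proof.
apply: le_trans (ler_normD _ _) _.
have := mxform_bound a a A; have := mxform_bound b b A; have := mxnorm1_ge0 A; nra.
Qed.

Lemma hform_im_bound a b A : `|hform_im a b A| <= mxnorm1 A * (sqnorm a + sqnorm b).
Proof.
apply: le_trans (ler_normB _ _) _.
have := mxform_bound b a A; have := mxform_bound a b A; lra.
Qed.

Lemma hform_eigen a b A B x y :
  a *m A = x *: (a *m B) - y *: (b *m B) ->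
  b *m A = x *: (b *m B) + y *: (a *m B) ->
  hform_re a b A = x * hform_re a b B - y * hform_im a b B /\
  hform_im a b A = x * hform_im a b B + y * hform_re a b B.
Proof.
rewrite -scaleNr => /mxform_combl Ea /mxform_combl Eb.
rewrite /hform_re /hform_im (Ea a) (Ea b) (Eb a) (Eb b); split; ring.
Qed.

End RealForms.

Section Scalar.
Variable R : realFieldType.

(* In complex terms: [N + i s = (x + i y) (g1 + i g2)]. *)
Lemma cquotient_bounds (N s g1 g2 x y d : R) :
  N = x * g1 - y * g2 -> s = x * g2 + y * g1 ->
  0 < N * g1 + s * g2 -> N ^+ 2 + s ^+ 2 < d ^+ 2 * g1 ^+ 2 ->
  0 < x /\ x ^+ 2 + y ^+ 2 < d ^+ 2.
Proof.
move=> EN Es pos lt_h_g.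
have re_eq : x * (g1 ^+ 2 + g2 ^+ 2) = N * g1 + s * g2 by rewrite EN Es; ring.
have norm_eq : (x ^+ 2 + y ^+ 2) * (g1 ^+ 2 + g2 ^+ 2) = N ^+ 2 + s ^+ 2.
  by rewrite EN Es; ring.
have g_gt0 : 0 < g1 ^+ 2 + g2 ^+ 2.
  rewrite lt_def addr_ge0 ?sqr_ge0 // andbT; apply: contraTneq pos => g0.
  by rewrite -re_eq g0 mulr0 ltxx.
split; first by rewrite -(pmulr_lgt0 _ g_gt0) re_eq.
rewrite -(ltr_pM2r g_gt0) norm_eq; apply: lt_le_trans lt_h_g _.
by rewrite ler_wpM2l ?sqr_ge0 // lerDl sqr_ge0.
Qed.

Lemma abs_lt_of_sqr_lt (x d : R) : 0 <= d -> x ^+ 2 < d ^+ 2 -> `|x| < d.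
Proof.
move=> d_ge0 lt_x_d.
by rewrite -(@ltr_pXn2r _ 2) ?nnegrE ?normr_ge0 // real_normK ?num_real.
Qed.

Lemma abs_lt_of_sqr_add_lt (x y d : R) : 0 <= d -> x ^+ 2 + y ^+ 2 < d ^+ 2 -> `|x| < d /\ `|y| < d.
Proof.
move=> d_ge0 lt_xy_d; have := sqr_ge0 x; have := sqr_ge0 y.
by split; apply: abs_lt_of_sqr_lt => //; lra.
Qed.

Lemma pencil_estimates (N s e1 e2 c K w d : R) :
  0 < N -> `|s| <= c * N -> `|e1| <= K * N -> `|e2| <= K * N ->
  0 <= c -> 0 <= K -> 0 < d -> K * (1 + c) + 2 * (1 + c) / d < w ->
  let g1 := (w ^+ 2 + w) * N + e1 in let g2 := w * s + e2 in
  0 < N * g1 + s * g2 /\ (2 * w * N) ^+ 2 + (2 * w * s) ^+ 2 < d ^+ 2 * g1 ^+ 2.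
Proof.
move=> N_gt0 s_le e1_le e2_le c_ge0 K_ge0 d_gt0 lt_w g1 g2.
have cd_gt0 : 0 < 2 * (1 + c) / d by rewrite divr_gt0 //; lra.
have Kc_ge0 : 0 <= K * c by rewrite mulr_ge0.
have w_gt0 : 0 < w by lra.
have K_le_w : K <= w by lra.
have wd_gt : 2 * (1 + c) < w * d by rewrite -ltr_pdivrMr //; lra.
have s2_le : s ^+ 2 <= (c * N) ^+ 2.
  by rewrite -real_normK ?num_real // !expr2 ler_pM ?normr_ge0.
have se2_ge : - (c * N * (K * N)) <= s * e2.
  have : `|s * e2| <= c * N * (K * N) by rewrite normrM ler_pM ?normr_ge0.
  by rewrite ler_norml => /andP[].
have e1N_ge : - (K * N * N) <= e1 * N.
  by rewrite -mulNr ler_pM2r //; move: e1_le; rewrite ler_norml => /andP[].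
have g1_ge : w ^+ 2 * N <= g1.
  have : 0 <= (w - K) * N by rewrite mulr_ge0 ?subr_ge0 // ltW.
  by move: e1_le; rewrite /g1 ler_norml => /andP[+ _]; lra.
split.
  have -> : N * g1 + s * g2 = (w ^+ 2 + w) * N ^+ 2 + e1 * N + w * s ^+ 2 + s * e2.
    by rewrite /g1 /g2; ring.
  have : 0 < (w - K * (1 + c)) * N ^+ 2 by rewrite mulr_gt0 ?subr_gt0 ?exprn_gt0 //; lra.
  have : 0 <= w ^+ 2 * N ^+ 2 by rewrite mulr_ge0 ?sqr_ge0.
  have : 0 <= w * s ^+ 2 by rewrite mulr_ge0 ?sqr_ge0 // ltW.
  lra.
have lhs_le : (2 * w * N) ^+ 2 + (2 * w * s) ^+ 2 <= (2 * (1 + c) * (w * N)) ^+ 2.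
  have : 0 <= w ^+ 2 * (c * N ^+ 2) by rewrite mulr_ge0 ?sqr_ge0 // mulr_ge0 ?sqr_ge0.
  have : 0 <= w ^+ 2 * ((c * N) ^+ 2 - s ^+ 2) by rewrite mulr_ge0 ?sqr_ge0 ?subr_ge0.
  lra.
have wN_gt0 : 0 < w * N by rewrite mulr_gt0.
have mid_lt : (2 * (1 + c) * (w * N)) ^+ 2 < (w * d * (w * N)) ^+ 2.
  rewrite ltr_pXn2r ?nnegrE ?ltr_pM2r //; first by rewrite mulr_ge0 ?ltW //; lra.
  by rewrite !mulr_ge0 ?ltW.
have rhs_le : (w * d * (w * N)) ^+ 2 <= d ^+ 2 * g1 ^+ 2.
  have -> : (w * d * (w * N)) ^+ 2 = d ^+ 2 * (w ^+ 2 * N) ^+ 2 by ring.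
  rewrite ler_wpM2l ?sqr_ge0 // ler_pXn2r ?nnegrE //; first by rewrite mulr_ge0 ?sqr_ge0 ?ltW.
  by apply: le_trans g1_ge; rewrite mulr_ge0 ?sqr_ge0 ?ltW.
by apply: le_lt_trans lhs_le (lt_le_trans mid_lt rhs_le).
Qed.

End Scalar.

Section Pencil.
Variables (R : realFieldType) (n : nat) (Rm P : 'M[R]_n).
Hypothesis Rm_shifted_skew : (Rm - 1%:M)^T = - (Rm - 1%:M).
Implicit Types (a b : 'rV[R]_n) (w : R).

Definition pencil w := (w ^+ 2)%:M + w *: Rm + P.

Lemma hform_re_shifted_skew a b : hform_re a b Rm = sqnorm a + sqnorm b.
Proof.
have -> : Rm = 1%:M + (Rm - 1%:M) by rewrite addrC subrK.
by rewrite hform_reD hform_re1 hform_re_skew ?addr0.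
Qed.

Lemma hform_re_pencil a b w :
  hform_re a b (pencil w) = (w ^+ 2 + w) * (sqnorm a + sqnorm b) + hform_re a b P.
Proof.
by rewrite !hform_reD -scalemx1 !hform_reZ hform_re1 hform_re_shifted_skew mulrDl.
Qed.

Lemma hform_im_pencil a b w :
  hform_im a b (pencil w) = w * hform_im a b Rm + hform_im a b P.
Proof. by rewrite !hform_imD -scalemx1 !hform_imZ hform_im1 mulr0 add0r. Qed.

Lemma pencil_unit w : 0 <= w -> mxnorm1 P < w ^+ 2 + w -> pencil w \in unitmx.
Proof.
move=> w_ge0 lt_P_w; rewrite unitmxE unitfE; apply/negP => /det0P[v v_neq0 vG].
have : hform_re v v (pencil w) = 0 by rewrite /hform_re /mxform vG mul0mx mxE addr0.
rewrite hform_re_pencil; have := hform_re_bound v v P; rewrite ler_norml.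
have := sqnorm_gt0 v_neq0; nra.
Qed.

(* The first summand makes [Re eta > 0]; the second makes [|eta| < d],
   as [|eta| <= 2 (1 + mxnorm1 Rm) / w]. *)
Definition pencil_threshold (d : R) :=
  mxnorm1 P * (1 + mxnorm1 Rm) + 2 * (1 + mxnorm1 Rm) / d.

Lemma pencil_threshold_gt0 d : 0 < d -> 0 < pencil_threshold d.
Proof.
move=> d_gt0; have := mxnorm1_ge0 Rm; have := mxnorm1_ge0 P => K_ge0 c_ge0.
have : 0 <= mxnorm1 P * (1 + mxnorm1 Rm) by rewrite mulr_ge0 //; lra.
have : 0 < 2 * (1 + mxnorm1 Rm) / d by rewrite divr_gt0 //; lra.
rewrite /pencil_threshold; lra.
Qed.

Lemma scaled_pencil_unit d w :
  0 < d -> pencil_threshold d < w -> (2 * w)^-1 *: pencil w \in unitmx.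
Proof.
move=> d_gt0 lt_w; have w_gt0 := lt_trans (pencil_threshold_gt0 d_gt0) lt_w.
rewrite unitmxZ ?unitfE ?invr_eq0 ?mulf_neq0 ?gt_eqF // pencil_unit ?ltW //.
have : 0 < 2 * (1 + mxnorm1 Rm) / d.
  by rewrite divr_gt0 //; have := mxnorm1_ge0 Rm; lra.
have : mxnorm1 P <= mxnorm1 P * (1 + mxnorm1 Rm).
  by rewrite ler_peMr ?mxnorm1_ge0 // lerDl mxnorm1_ge0.
move: lt_w; rewrite /pencil_threshold; have := sqr_ge0 w; lra.
Qed.

Lemma pencil_eigenvalue_bounds w x y d a b F :
  F = (2 * w)^-1 *: pencil w -> 0 < d -> pencil_threshold d < w ->
  a != 0 \/ b != 0 ->
  a *m Rm = x *: (a *m F) - y *: (b *m F) ->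
  b *m Rm = x *: (b *m F) + y *: (a *m F) ->
  0 < x < d /\ `|y| < d.
Proof.
move=> -> d_gt0 lt_w ab_neq0 Ea Eb.
have w_neq0 : w != 0 by rewrite gt_eqF // (lt_trans (pencil_threshold_gt0 d_gt0)).
have N_gt0 : 0 < sqnorm a + sqnorm b.
  have := sqnorm_ge0 a; have := sqnorm_ge0 b.
  by case: ab_neq0 => /sqnorm_gt0; lra.
have [ERe EIm] := hform_eigen Ea Eb.
rewrite hform_re_shifted_skew !hform_reZ !hform_imZ in ERe EIm.
rewrite hform_re_pencil hform_im_pencil in ERe EIm.
have [pos lt_h_g] := pencil_estimates N_gt0 (hform_im_bound a b Rm) (hform_re_bound a b P)
  (hform_im_bound a b P) (mxnorm1_ge0 Rm) (mxnorm1_ge0 P) d_gt0 lt_w.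
set N := sqnorm a + sqnorm b in ERe EIm pos lt_h_g.
set s := hform_im a b Rm in ERe EIm pos lt_h_g.
set g1 := _ * N + hform_re a b P in ERe EIm pos lt_h_g.
set g2 := w * s + _ in ERe EIm pos lt_h_g.
clearbody N s g1 g2.
have E1 : 2 * w * N = x * g1 - y * g2 by rewrite {1}ERe; field.
have E2 : 2 * w * s = x * g2 + y * g1 by rewrite {1}EIm; field.
have pos2 : 0 < 2 * w * N * g1 + 2 * w * s * g2.
  have -> : 2 * w * N * g1 + 2 * w * s * g2 = 2 * w * (N * g1 + s * g2) by ring.
  by rewrite !mulr_gt0 // lt_def w_neq0 (ltW (lt_trans (pencil_threshold_gt0 d_gt0) lt_w)).
have [x_gt0 /(abs_lt_of_sqr_add_lt (ltW d_gt0))[x_lt y_lt]] := cquotient_bounds E1 E2 pos2 lt_h_g.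
by rewrite x_gt0 (le_lt_trans (ler_norm x) x_lt) y_lt.
Qed.

End Pencil.

Section RealPart.
Variable R : rcfType.
Local Notation realC := (real_complex R).
Local Notation Re := (@complex.Re R).
Local Notation Im := (@complex.Im R).

Lemma Re_mulr_real (z : R[i]) (x : R) : Re (z * x%:C)%C = Re z * x.
Proof. by case: z => a b /=; rewrite mulr0 subr0. Qed.

Lemma Im_mulr_real (z : R[i]) (x : R) : Im (z * x%:C)%C = Im z * x.
Proof. by case: z => a b /=; rewrite mulr0 add0r. Qed.

Lemma map_Re_mulmx_real m k p (u : 'M[R[i]]_(m, k)) (A : 'M[R]_(k, p)) :
  map_mx Re (u *m map_mx realC A) = map_mx Re u *m A.
Proof.
apply/matrixP => i j; rewrite !mxE; elim/big_rec2: _ => // l y1 y2 _ <-.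
by rewrite !mxE -Re_mulr_real; case: (_ * _) => ? ?; case: y2.
Qed.

Lemma map_Im_mulmx_real m k p (u : 'M[R[i]]_(m, k)) (A : 'M[R]_(k, p)) :
  map_mx Im (u *m map_mx realC A) = map_mx Im u *m A.
Proof.
apply/matrixP => i j; rewrite !mxE; elim/big_rec2: _ => // l y1 y2 _ <-.
by rewrite !mxE -Im_mulr_real; case: (_ * _) => ? ?; case: y2.
Qed.

Lemma map_Re_scale m k (z : R[i]) (u : 'M[R[i]]_(m, k)) :
  map_mx Re (z *: u) = Re z *: map_mx Re u - Im z *: map_mx Im u.
Proof. by apply/matrixP => i j; rewrite !mxE; case: z; case: (u i j). Qed.

Lemma map_Im_scale m k (z : R[i]) (u : 'M[R[i]]_(m, k)) :
  map_mx Im (z *: u) = Re z *: map_mx Im u + Im z *: map_mx Re u.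
Proof.
by apply/matrixP => i j; rewrite !mxE; case: z; case: (u i j) => ? ? ? ? /=; rewrite addrC.
Qed.

Lemma map_Re_Im_eq0 m k (u : 'M[R[i]]_(m, k)) :
  map_mx Re u = 0 -> map_mx Im u = 0 -> u = 0.
Proof.
move=> /matrixP Reu /matrixP Imu; apply/matrixP => i j.
by move: (Reu i j) (Imu i j); rewrite !mxE; case: (u i j) => /= ? ? -> ->.
Qed.

Lemma eigenvalue_invmx_mulmx n (F A : 'M[R]_n) (eta : R[i]) :
  F \in unitmx -> eigenvalue (map_mx realC (invmx F *m A)) eta ->
  exists a b : 'rV[R]_n, [/\ a != 0 \/ b != 0,
    a *m A = Re eta *: (a *m F) - Im eta *: (b *m F) &
    b *m A = Re eta *: (b *m F) + Im eta *: (a *m F)].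
Proof.
move=> F_unit /eigenvalueP[u u_eig u_neq0].
pose v := u *m map_mx realC (invmx F).
have vF : v *m map_mx realC F = u by rewrite -mulmxA -map_mxM mulVmx // map_mx1 mulmx1.
have v_eig : v *m map_mx realC A = eta *: (v *m map_mx realC F).
  by rewrite vF -u_eig -mulmxA -map_mxM.
exists (map_mx Re v), (map_mx Im v); split.
- apply/orP; rewrite -negb_and; apply: contra u_neq0 => /andP[/eqP Rev /eqP Imv].
  by rewrite -vF (map_Re_Im_eq0 Rev Imv) mul0mx.
- by rewrite -map_Re_mulmx_real v_eig map_Re_scale map_Re_mulmx_real map_Im_mulmx_real.
- by rewrite -map_Im_mulmx_real v_eig map_Im_scale map_Re_mulmx_real map_Im_mulmx_real.
Qed.

End RealPart.

Lemma diag_mx_tr (R : pzRingType) n (A : 'M[R]_n) : is_diag_mx A -> A^T = A.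
Proof. by case/diag_mxP => d ->; rewrite tr_diag_mx. Qed.

Section NASS.
Variables (R : realType) (n : nat) (T D : 'M[R]_n).

Lemma calR_shifted_skew : T^T = T -> D^T = D -> (calR T D - 1%:M)^T = - (calR T D - 1%:M).
Proof.
move=> symT symD; rewrite /calR (scalar_mx_block n n) opp_block_mx add_block_mx.
rewrite tr_block_mx opp_block_mx !subrr !trmx0 oppr0 !addr0 !opprB.
by rewrite !raddfB /= symT symD.
Qed.

Lemma calR_calT_calD : calR T D = calT T + calD D.
Proof.
rewrite /calR /calT /calD add_block_mx !addr0 addrC.
by congr block_mx; rewrite addrC.
Qed.

Lemma NASS_pencil w : NASS T D w = (2 * w)^-1 *: pencil (calR T D) (calT T *m calD D) w.
Proof.
rewrite /NASS /pencil calR_calT_calD; congr (_ *: _).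
rewrite mulmxDl !mulmxDr -scalar_mxM mul_scalar_mx mul_mx_scalar -expr2 scalerDr.
by rewrite !addrA; congr (_ + _); rewrite -!addrA [w *: calD D + _]addrC.
Qed.

End NASS.

Theorem theorem4p2 (R : realType) (M : nat) (T D : 'M[R]_M) :
  (1 <= M)%N -> sym_posdef T -> nonneg_diag D ->
  forall delta : R, 0 < delta ->
  exists Omega : R, 0 < Omega /\
    forall w : R, Omega < w ->
    forall eta : R[i], eigenvalue (precond_C T D w) eta ->
      0 < complex.Re eta < delta /\ `|complex.Im eta| < delta.
Proof.
move=> _ [symT _] [diagD _] d d_gt0.
have skR := calR_shifted_skew symT (diag_mx_tr diagD).
exists (pencil_threshold (calR T D) (calT T *m calD D) d).
split=> [|w lt_w eta]; first exact: pencil_threshold_gt0.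
have F_unit : NASS T D w \in unitmx by rewrite NASS_pencil (scaled_pencil_unit skR d_gt0 lt_w).
move=> /(eigenvalue_invmx_mulmx F_unit)[a [b [ab_neq0 Ea Eb]]].
exact (pencil_eigenvalue_bounds skR (NASS_pencil T D w) d_gt0 lt_w ab_neq0 Ea Eb).
Qed.
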